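(* Let $\rho$ be a probability distribution on $\mathbb N_0$ with finite first moment, $\sum_k k\rho_k<\infty$, and let $\mathcal T$ be a Galton–Watson tree $\mathrm{GW}(\rho)$. Then for every non-decreasing family of positive constants $(C_{k,T})$ and every finite measure $\varsigma$ on $\mathcal J$, $\mathcal T$ is a.s. finitely dissociable.
   Context: $\mathrm{GW}(\rho)$ is the random rooted tree in which the root and every other vertex independently have a number of children distributed according to $\rho$. Finite dissociability. Fix a countable set $\mathcal J$, a finite measure $\varsigma$ on $\mathcal J$ with $\varsigma(\mathcal J)>0$, and constants $C_{k,T}\in(0,\infty)$, $k\in\mathbb N$, $T\in\mathbb R_+$, non-decreasing in each index. For a vertex $v$ of a graph $G$ let $\mathrm{cl}_v$ denote $v$ together with its neighbours. A deterministic locally finite graph $G$ is finitely dissociable if for every $T\in(0,\infty)$ there is $\Delta\in(0,T]$ such that the following holds: if $(N_v)_{v\in V_G}$ are i.i.d. Poisson random measures on $\mathbb R_+^2\times\mathcal J$ with intensity $\mathrm{Leb}^2\otimes\varsigma$ and a vertex $v$ is called active when $N_v((0,\Delta]\times(0,C_{|\mathrm{cl}_v|,T}]\times\mathcal J)>0$ (so vertices are independently active with probability $1-\exp(-\Delta\varsigma(\mathcal J)C_{|\mathrm{cl}_v|,T})$), then a.s. every connected component of the subgraph of $G$ induced by the active vertices is finite. A random graph is a.s. finitely dissociable if its realization is finitely dissociable almost surely. *)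

From HB Require Import structures.
From mathcomp Require Import all_boot all_order all_algebra.
From mathcomp Require Import all_classical all_reals all_analysis.
Set Implicit Arguments. Unset Strict Implicit. Unset Printing Implicit Defensive.
Import Order.TTheory GRing.Theory Num.Theory numFieldNormedType.Exports.
Local Open Scope classical_set_scope.
Local Open Scope ring_scope.

Definition discrete_rv {d} {Omega : measurableType d} {T : Type}
  (X : Omega -> T) : Prop := forall x : T, measurable (X @^-1` [set x]).

Definition mutually_independent {d} {Omega : measurableType d}
  {R : realType} (P : probability Omega R) {I : eqType} {T : Type}
  (S : set I) (X : I -> Omega -> T) : Prop :=
  forall (F : seq I) (A : I -> set T), uniq F -> (forall i, i \in F -> S i) ->
    P (\bigcap_(i in [set i | i \in F]) (X i @^-1` A i)) =
    ((\prod_(i <- F) fine (P (X i @^-1` A i)))%:E)%E.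

(** Locally finite graphs are given by a vertex set [vert : set V] and
    finite duplicate-free neighbour lists [nb v]. *)

Definition cl_size {V : Type} (nb : V -> seq V) (v : V) : nat := (size (nb v)).+1.

Inductive conn {V : eqType} (A : set V) (nb : V -> seq V) (v : V) : V -> Prop :=
  | conn_refl : A v -> conn A nb v v
  | conn_step w w' : conn A nb v w -> w' \in nb w -> A w' -> conn A nb v w'.

Definition all_components_finite {V : eqType} (A : set V) (nb : V -> seq V) : Prop :=
  forall v, A v -> finite_set [set w | conn A nb v w].

(** The activity indicators are independent
    Bernoulli variables with P(v active) = 1 - exp(-Delta varsigma(J) C_{|cl_v|,T}),
    which is exactly the law of the events N_v((0,Delta]x(0,C]xJ) > 0 for
    i.i.d. Poisson random measures N_v of intensity Leb^2 (x) varsigma. *)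
Definition finitely_dissociable {R : realType} {dJ} {J : measurableType dJ}
  (vs : {finite_measure set J -> \bar R}) (C : nat -> R -> R)
  {V : eqType} (vert : set V) (nb : V -> seq V) : Prop :=
  forall T : R, 0 < T ->
  exists Delta : R, 0 < Delta /\ Delta <= T /\
    forall (d : measure_display) (Omega : measurableType d)
           (P : probability Omega R) (act : V -> Omega -> bool),
      (forall v, vert v -> discrete_rv (act v)) ->
      mutually_independent P vert act ->
      (forall v, vert v -> P (act v @^-1` [set true]) =
          (1 - expR (- (Delta * fine (vs setT) * C (cl_size nb v) T)))%:E) ->
      {ae P, forall w, all_components_finite
                         [set v | vert v /\ act v w] nb}.

(** Galton--Watson trees in Ulam--Harris encoding: vertices are words
    u = [i_1; ...; i_k] of natural numbers, x u is the number of children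
    of u, the root is [::] and the children of u are rcons u i, i < x u. *)
Definition gw_vert (x : seq nat -> nat) : set (seq nat) :=
  [set u | forall j, (j < size u)%N -> (nth 0 u j < x (take j u))%N].

Definition gw_nb (x : seq nat -> nat) (u : seq nat) : seq (seq nat) :=
  (if u is [::] then [::] else [:: take (size u).-1 u])
  ++ [seq rcons u i | i <- iota 0 (x u)].

From HB Require Import structures.
From mathcomp Require Import all_boot all_order all_algebra.
From mathcomp Require Import all_classical all_reals all_analysis.
From mathcomp Require Import ring lra measurable_realfun.
Set Implicit Arguments. Unset Strict Implicit. Unset Printing Implicit Defensive.
Import Order.TTheory GRing.Theory Num.Theory numFieldNormedType.Exports.
Local Open Scope classical_set_scope.
Local Open Scope ring_scope.

(* A component of the active subgraph of a tree is infinite only if some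
   active vertex a starts arbitrarily long descending paths of active vertices
   (König). Given the tree, such a path of length n has probability at most
   the weight Z_n(a) = p(x_a) * sum over the children b of a of Z_(n-1)(b),
   where p(k) bounds the activation probability of a vertex with k children.
   Averaged over GW(rho), E Z_n(a) <= (sum_k k rho_k p(k))^n <= 2^-n as soon
   as Delta is so small that sum_k k rho_k (1 - exp(-Delta varsigma(J) C_(k+2,T)))
   <= 1/2, which the finite mean allows. Hence almost surely inf_n Z_n(a) = 0
   for every vertex a and every integer bound on T, and then, for the
   activity process on the fixed tree, no vertex starts an infinite active
   descent. *)

Lemma uniq_map_fst_eq (S T : eqType) (L : seq (S * T)) v k k' :
  uniq (map fst L) -> (v, k) \in L -> (v, k') \in L -> k = k'.
Proof.
elim: L => [//|[u j] L IH] /= /andP[uL {}/IH IH]; rewrite !inE.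
case/orP => [/eqP[Ev Ek]|vkL]; case/orP => [/eqP[Ev' Ek']|vk'L].
- by rewrite Ek Ek'.
- by move: uL; rewrite -Ev (map_f fst vk'L).
- by move: uL; rewrite -Ev' (map_f fst vkL).
- exact: IH.
Qed.

Lemma nneseries_single (R : realType) (f : nat -> \bar R) k0 :
  (forall k, (0 <= f k)%E) -> (forall k, k != k0 -> f k = 0%E) ->
  (\sum_(k <oo) f k = f k0)%E.
Proof.
move=> f_ge0 fk0; rewrite (@nneseriesD1 R f k0 xpredT) // eseries0 ?adde0 //.
by move=> k _ /= /fk0.
Qed.

Lemma measurable_fun_select (R : realType) d (Omega : measurableType d)
    (X : Omega -> nat) (G : nat -> Omega -> R) :
  discrete_rv X -> (forall k, measurable_fun setT (G k)) ->
  measurable_fun setT (fun w => G (X w) w).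
Proof.
move=> X_rv mG _ Y mY; rewrite setTI.
rewrite [_ @^-1` _](_ : _ = \bigcup_k (X @^-1` [set k] `&` (G k @^-1` Y))).
  apply: bigcupT_measurable => k; apply: measurableI; first exact: X_rv.
  by have := mG k measurableT Y mY; rewrite setTI.
apply/seteqP; split => w /=; first by move=> Yw; exists (X w).
by case=> k _ [/= -> ].
Qed.

Lemma ae_forall_countable d (T : measurableType d) (R : realType)
    (mu : {measure set T -> \bar R}) (I : countType) (Q : I -> T -> Prop) :
  (forall i, {ae mu, forall t, Q i t}) -> {ae mu, forall t, forall i, Q i t}.
Proof.
move=> aeQ; pose F k := if unpickle k is Some i then ~` [set t | Q i t] else set0.
apply: (@negligibleS _ _ _ _ (\bigcup_k F k)); last first.
  by apply: negligible_bigcup => k; rewrite /F; case: unpickle => [i|];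
    [exact: aeQ | exact: negligible_set0].
move=> t /= /existsNP[i Qi]; exists (pickle i) => //.
by rewrite /F pickleK.
Qed.

Section one_sub_expN.
Variable R : realType.
Implicit Types s t : R.

Lemma one_sub_expN_ge0 t : 0 <= t -> 0 <= 1 - expR (- t).
Proof. by move=> t0; rewrite subr_ge0 expR_le1 oppr_le0. Qed.

Lemma one_sub_expN_le t : 1 - expR (- t) <= t.
Proof. by have := expR_ge1Dx (- t); lra. Qed.

Lemma one_sub_expN_le1 t : 1 - expR (- t) <= 1.
Proof. by have := expR_gt0 (- t); lra. Qed.

Lemma one_sub_expN_homo s t : s <= t -> 1 - expR (- s) <= 1 - expR (- t).
Proof. by move=> st; rewrite lerD2l lerN2 ler_expR lerN2. Qed.

End one_sub_expN.

Lemma series_tail_le (R : realType) (u : nat -> R) (e : R) :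
  (forall k, 0 <= u k) -> cvg (series u @ \oo) -> 0 < e ->
  exists K, forall n, \sum_(K <= k < K + n) u k <= e.
Proof.
move=> u_ge0 cu e0.
have [K _ Ke] := (cvgrPdist_le _ _).1 cu e e0.
exists K => n; rewrite -sub_series_geq ?leq_addr //.
have le_lim : series u (K + n) <= limn (series u).
  apply: nondecreasing_cvgn_le => // i j ij; rewrite !seriesEnat /=.
  by rewrite (big_cat_nat _ ij) //= lerDl sumr_ge0.
have := Ke K (leqnn K); have := ler_norm (limn (series u) - series u K); lra.
Qed.

(* The first M terms are damped by the small factor D, the tail is small
   because the series converges. *)
Lemma exists_damping_series_le (R : realType) (u a : nat -> R) (e : R) :
  (forall k, 0 <= u k) -> cvg (series u @ \oo) ->
  (forall k, 0 <= a k) -> {homo a : k k' / (k <= k')%N >-> k <= k'} -> 0 < e ->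
  exists2 D, 0 < D & (\sum_(k <oo) (u k * (1 - expR (- (D * a k))))%:E <= e%:E)%E.
Proof.
move=> u_ge0 cu a_ge0 a_homo e0.
have [M tail] := series_tail_le u_ge0 cu (divr_gt0 e0 (ltr0Sn R 1)).
pose B := a M * series u M.
have B0 : 0 <= B by rewrite mulr_ge0 // seriesEnat sumr_ge0.
pose D := e / (2 * (B + 1)).
have D0 : 0 < D by rewrite divr_gt0 // mulr_gt0 //; lra.
have DB : D * (2 * (B + 1)) = e by rewrite divfK //; apply/lt0r_neq0; lra.
exists D => //.
pose f k := u k * (1 - expR (- (D * a k))).
have f_ge0 k : 0 <= f k by rewrite mulr_ge0 // one_sub_expN_ge0 // mulr_ge0 // ltW.
apply: lime_le; first by apply: is_cvg_nneseries => k _ _; rewrite lee_fin; exact: f_ge0.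
apply: nearW => m; rewrite sumEFin lee_fin.
apply: (@le_trans _ _ (\sum_(0 <= k < M + m) f k)).
  by rewrite (big_cat_nat _ (leq_addl M m)) //= lerDl sumr_ge0.
rewrite (big_cat_nat _ (leq_addr m M)) //=.
have head : \sum_(0 <= k < M) f k <= D * B.
  apply: (@le_trans _ _ (\sum_(0 <= k < M) u k * (D * a M))).
    rewrite ler_sum_nat // => k /andP[_ kM]; rewrite ler_wpM2l //.
    by rewrite (le_trans (one_sub_expN_le _)) // ler_wpM2l ?(ltW D0) // a_homo // ltnW.
  by rewrite -mulr_suml /B seriesEnat /= mulrC mulrA.
have {}tail : \sum_(M <= k < M + m) f k <= e / 2.
  apply: le_trans (tail m); rewrite ler_sum_nat // => k _.
  by rewrite /f ler_piMr // one_sub_expN_le1.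
nra.
Qed.

(** * Descending paths in Ulam-Harris trees *)

Section descents.
Variable x : seq nat -> nat.

Fixpoint descent (f : seq nat -> bool) (a : seq nat) (n : nat) : bool :=
  f a && (if n is n'.+1 then has (fun i => descent f (rcons a i) n') (iota 0 (x a))
          else true).

Lemma descent_le (f : seq nat -> bool) a n m : (n <= m)%N -> descent f a m -> descent f a n.
Proof.
elim: n m a => [|n IH] [|m] a //= nm; first by case/andP => ->.
case/andP=> -> /hasP[i iI di] /=.
by apply/hasP; exists i => //; apply: IH di.
Qed.

Lemma gw_vert_rcons a i : gw_vert x a -> (i < x a)%N -> gw_vert x (rcons a i).
Proof.
move=> va ia j; rewrite size_rcons ltnS leq_eqVlt => /orP[/eqP ->|ja].
  by rewrite nth_rcons ltnn eqxx -cats1 take_cat ltnn subnn take0 cats0.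
by rewrite nth_rcons ja -cats1 take_cat ja; apply: va.
Qed.

Lemma descent_prefixes (f : seq nat -> bool) a s :
  gw_vert x (a ++ s) -> (forall i, (i <= size s)%N -> f (a ++ take i s)) ->
  descent f a (size s).
Proof.
elim: s a => [|i s IH] a vas fs /=.
  by have := fs 0%N (leqnn _); rewrite take0 cats0 => ->.
have := fs 0%N isT; rewrite take0 cats0 => -> /=.
apply/hasP; exists i.
  have := vas (size a); rewrite size_cat /= addnS ltnS leq_addr => /(_ isT).
  by rewrite nth_cat ltnn subnn /= take_cat ltnn subnn take0 cats0 mem_iota add0n.
apply: IH; first by rewrite cat_rcons.
by move=> j js; have := fs j.+1 js; rewrite /= -cat_rcons.
Qed.

Lemma conn_gw_nb_path (A : set (seq nat)) v w :
  conn A (gw_nb x) v w -> exists j s, [/\ (j <= size v)%N, w = take j v ++ s &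
     forall i, (i <= size s)%N -> A (take j v ++ take i s)].
Proof.
elim=> [Av|w1 w2 _ [j [s [jv Ew1 As]]] w2w1 Aw2].
  exists (size v), [::]; split => //; first by rewrite take_size cats0.
  by move=> i; rewrite leqn0 => /eqP ->; rewrite take_size cats0.
move: w2w1; rewrite /gw_nb mem_cat => /orP[].
  case Ew1': w1 => [//|y w1']; rewrite -Ew1' inE => /eqP Ew2.
  have w1n : w1 != [::] by rewrite Ew1'.
  have sz : size (take j v) = j by rewrite size_takel.
  case: s Ew1 As => [|z s] Ew1 As.
    rewrite cats0 in Ew1.
    have j0 : (0 < j)%N.
      by case: j jv Ew1 {As sz} => [|j] //; rewrite take0 => _ E; rewrite E in w1n.
    have Ew2' : w2 = take j.-1 v by rewrite Ew2 Ew1 sz take_takel ?leq_pred.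
    exists j.-1, [::]; split; first by rewrite (leq_trans (leq_pred _) jv).
      by rewrite cats0.
    by move=> i; rewrite leqn0 => /eqP ->; rewrite take0 cats0 -Ew2'.
  exists j, (take (size s) (z :: s)); split => //.
    rewrite Ew2 Ew1 size_cat sz /= addnS /= take_cat sz ltnNge leq_addr /=.
    by rewrite addKn.
  move=> i si; rewrite take_takel; first (apply: As; apply: (leq_trans si)).
    by rewrite size_take /=; case: ltnP.
  by rewrite size_take /= ltnS leqnn in si.
case/mapP=> i _ Ew2; rewrite Ew2 in Aw2; exists j, (rcons s i); split => //.
  by rewrite Ew2 Ew1 rcons_cat.
move=> k; rewrite size_rcons leq_eqVlt => /orP[/eqP ->|ks].
  by rewrite [take _ (rcons _ _)]take_oversize ?size_rcons // -rcons_cat -Ew1.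
by rewrite -cats1 takel_cat; [apply: As|].
Qed.

Definition bounded_words (n : nat) (a : seq nat) : set (seq nat) :=
  [set s | (size s < n)%N /\
           forall i, (i < size s)%N -> (nth 0%N s i < x (a ++ take i s))%N].

Lemma finite_bounded_words n a : finite_set (bounded_words n a).
Proof.
elim: n a => [|n IH] a.
  by apply: (sub_finite_set _ (finite_set0 _)) => s [].
apply: (@sub_finite_set _ _
  ([set [::]] `|` \bigcup_(i in `I_(x a)) (cons i @` bounded_words n (rcons a i)))).
  case=> [|i s] [sn sx]; first by left.
  right; exists i; first by have := sx 0%N isT; rewrite /= cats0.
  exists s => //; split => // j js.
  by have := sx j.+1 js; rewrite /= -cat_rcons.
rewrite finite_setU; split; first exact: finite_set1.
apply: bigcup_finite; first exact: finite_II.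
by move=> i _; apply: finite_image.
Qed.

Lemma uniform_descent_bound (f : seq nat -> bool) (Q : seq nat -> Prop) v :
  (forall a, Q a -> exists n, ~~ descent f a n) ->
  forall m, exists n, forall j, (j < m)%N -> Q (take j v) -> ~~ descent f (take j v) n.
Proof.
move=> Qn; elim=> [|m [n nm]]; first by exists 0%N.
have [Qm|nQm] := pselect (Q (take m v)); last first.
  by exists n => j; rewrite ltnS leq_eqVlt => /orP[/eqP ->|/nm].
have [k km] := Qn _ Qm.
exists (maxn n k) => j; rewrite ltnS leq_eqVlt => /orP[/eqP ->|jm] Qj.
  by apply: contra km; apply: descent_le; rewrite leq_maxr.
by apply: contra (nm j jm Qj); apply: descent_le; rewrite leq_maxl.
Qed.

(* Only finitely many ancestors [take j v] of v exist, so one depth bounds the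
   active descents from all of them, and the component of v lies in a finite
   set of words of bounded length. *)
Lemma gw_components_finite (f : seq nat -> bool) :
  (forall a, gw_vert x a -> f a -> exists n, ~~ descent f a n) ->
  all_components_finite [set v | gw_vert x v /\ f v] (gw_nb x).
Proof.
move=> fn v Av.
have [n nv] := @uniform_descent_bound f [set a | gw_vert x a /\ f a] v
  (fun a Qa => fn a Qa.1 Qa.2) (size v).+1.
apply: (sub_finite_set _ (finite_bounded_words (size v + n) [::])) => w vw.
have [j [s [jv -> As]]] := conn_gw_nb_path vw.
have vjs : gw_vert x (take j v ++ s).
  by have := As (size s) (leqnn _); rewrite take_size => -[].
split; last by move=> i si; rewrite cat0s; apply: vjs.
have sn : (size s < n)%N.
  rewrite ltnNge; apply/negP => ns.
  have Aj : gw_vert x (take j v) /\ f (take j v).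
    by have := As 0%N isT; rewrite take0 cats0.
  have := nv j jv Aj; rewrite (descent_le ns) //.
  by apply: descent_prefixes => // i si; have [] := As i si.
by rewrite size_cat size_takel // -addnS leq_add.
Qed.

End descents.

(** * The quenched bound *)

(* [p k] bounds the probability that a vertex with [k] children is active. *)
Fixpoint descent_weight (R : realType) (p : nat -> R) (x : seq nat -> nat)
    (a : seq nat) (n : nat) : R :=
  if n is n'.+1 then p (x a) * \sum_(i < x a) descent_weight p x (rcons a i) n'
  else 1.

Lemma descent_weight_ge0 (R : realType) (p : nat -> R) x a n :
  (forall k, 0 <= p k) -> 0 <= descent_weight p x a n.
Proof.
move=> p_ge0; elim: n a => [|n IH] a /=; first exact: ler01.
by rewrite mulr_ge0 // sumr_ge0.
Qed.

Section quenched.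
Context (R : realType) d (Omega : measurableType d) (P : probability Omega R).
Variables (x : seq nat -> nat) (act : seq nat -> Omega -> bool).
Hypotheses (act_rv : forall v, gw_vert x v -> discrete_rv (act v))
  (act_indep : mutually_independent P (gw_vert x) act).

Definition all_active (L : seq (seq nat)) : set Omega :=
  [set w | all (act^~ w) L].

Definition descent_event (a : seq nat) (n : nat) : set Omega :=
  [set w | descent x (act^~ w) a n].

Lemma measurable_all_active L :
  (forall v, v \in L -> gw_vert x v) -> measurable (all_active L).
Proof.
elim: L => [|v L IH] vL.
  by rewrite [all_active _](_ : _ = setT) //; apply/seteqP.
rewrite [all_active _](_ : _ = act v @^-1` [set true] `&` all_active L).
  apply: measurableI; first by apply: act_rv; apply: vL; rewrite inE eqxx.
  by apply: IH => u uL; apply: vL; rewrite inE uL orbT.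
by apply/seteqP; split => w; rewrite /all_active /=; [case/andP | case=> -> ->].
Qed.

Lemma all_active_prob L : uniq L -> (forall v, v \in L -> gw_vert x v) ->
  P (all_active L) = (\prod_(v <- L) fine (P (act v @^-1` [set true])))%:E.
Proof.
move=> uL vL; rewrite -(act_indep (fun=> [set true]) uL vL); congr (P _).
by apply/seteqP; split => w /= => [/allP wL v /wL|wL]; last apply/allP.
Qed.

Lemma measurable_descent_event a n : gw_vert x a -> measurable (descent_event a n).
Proof.
elim: n a => [|n IH] a va.
  rewrite [descent_event _ _](_ : _ = act a @^-1` [set true]); first exact: act_rv.
  by apply/seteqP; split => w; rewrite /descent_event /= andbT.
rewrite [descent_event _ _](_ : _ = act a @^-1` [set true] `&`
    \big[setU/set0]_(i < x a) descent_event (rcons a i) n).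
  apply: measurableI; first exact: act_rv.
  by apply: bigsetU_measurable => i _; apply/IH/gw_vert_rcons.
rewrite -(bigcup_mkord _ (fun i => descent_event (rcons a i) n)).
apply/seteqP; split => w; rewrite /descent_event /=.
  case/andP => -> /hasP[i]; rewrite mem_iota add0n => /andP[_ ia] di.
  by split => //; exists i.
move=> [-> [i ia di]] /=.
by apply/hasP; exists i => //; rewrite mem_iota add0n.
Qed.

Variable p : nat -> R.
Hypotheses (p_ge0 : forall k, 0 <= p k)
  (act_le : forall v, gw_vert x v -> (P (act v @^-1` [set true]) <= (p (x v))%:E)%E).

(* The ancestors [L] already constrained are kept strictly above [a], so they
   are disjoint from the vertices of any descent from [a]; this is what makes
   the activity of [a] independent of everything met further down. *)
Lemma descent_event_le_weight n a L : gw_vert x a -> uniq L ->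
  (forall v, v \in L -> gw_vert x v) -> (forall v, v \in L -> size v < size a)%N ->
  (P (all_active L `&` descent_event a n) <=
     ((\prod_(v <- L) fine (P (act v @^-1` [set true]))) * descent_weight p x a n)%:E)%E.
Proof.
pose q v := fine (P (act v @^-1` [set true])).
have q_ge0 v : 0 <= q v by apply/fine_ge0/measure_ge0.
have q_le v : gw_vert x v -> q v <= p (x v).
  by move=> vv; rewrite -lee_fin fineK ?fin_num_measure //; [exact: act_le | exact: act_rv].
elim: n a L => [|n IH] a L va uL vL La.
  rewrite /= mulr1 -all_active_prob //; apply: le_measure; rewrite ?inE.
  - by apply: measurableI; [exact: measurable_all_active | exact: measurable_descent_event].
  - exact: measurable_all_active.
  - exact: subIsetl.
have aL : a \notin L by apply/negP => /La; rewrite ltnn.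
have vaL v : v \in a :: L -> gw_vert x v by rewrite inE => /orP[/eqP ->|/vL].
have mF i : `I_(x a) i -> measurable (all_active (a :: L) `&` descent_event (rcons a i) n).
  move=> ia; apply: measurableI; first exact: measurable_all_active.
  exact/measurable_descent_event/gw_vert_rcons.
have sub : all_active L `&` descent_event a n.+1 `<=`
    \big[setU/set0]_(i < x a) (all_active (a :: L) `&` descent_event (rcons a i) n).
  move=> w [wL /andP[wa /hasP[i]]]; rewrite mem_iota add0n => /andP[_ ia] di.
  rewrite -(bigcup_mkord _ (fun i => all_active (a :: L) `&` descent_event (rcons a i) n)).
  by exists i => //; split => //; rewrite /all_active /= wa.
have mA : measurable (all_active L `&` descent_event a n.+1).
  by apply: measurableI; [exact: measurable_all_active | exact: measurable_descent_event].
apply: (le_trans (content_subadditive P mF mA sub)).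
apply: (@le_trans _ _ (\sum_(i < x a)
   ((\prod_(v <- a :: L) q v) * descent_weight p x (rcons a i) n)%:E)).
  apply: lee_sum => i _; apply: IH => //; first exact: gw_vert_rcons.
    by rewrite /= aL.
  move=> v; rewrite inE size_rcons => /orP[/eqP -> //|/La].
  exact: ltnW.
rewrite sumEFin lee_fin -mulr_sumr big_cons /= -mulrA mulrCA.
rewrite ler_wpM2l ?prodr_ge0 // ler_wpM2r ?q_le //.
by rewrite sumr_ge0 // => i _; apply: descent_weight_ge0.
Qed.

Lemma ae_no_infinite_descent a :
  (gw_vert x a -> forall e, 0 < e -> exists n, descent_weight p x a n < e) ->
  {ae P, forall w, gw_vert x a -> exists n, ~~ descent x (act^~ w) a n}.
Proof.
move=> small; have [va|nva] := pselect (gw_vert x a); last first.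
  by apply: aeW => w /nva.
have mD : measurable (\bigcap_n descent_event a n).
  by apply: bigcapT_measurable => n; exact: measurable_descent_event.
apply: (@negligibleS _ _ _ _ (\bigcap_n descent_event a n)).
  by move=> w /= nw n _; apply: contrapT => dn; apply: nw => _; exists n; apply/negP.
apply/negligibleP => //; apply/eqP; rewrite -measure_le0.
apply/lee_addgt0Pr => e e0; rewrite add0e.
have [n ne] := small va e e0.
apply: (@le_trans _ _ (P (all_active [::] `&` descent_event a n))).
  apply: le_measure; rewrite ?inE //; last by move=> w /(_ n I).
  by apply: measurableI; [exact: measurable_all_active | exact: measurable_descent_event].
apply: le_trans (descent_event_le_weight _ va _ _ _) _ => //.
by rewrite big_nil mul1r lee_fin ltW.
Qed.

Lemma ae_gw_components_finite :
  (forall a, gw_vert x a -> forall e, 0 < e -> exists n, descent_weight p x a n < e) ->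
  {ae P, forall w, all_components_finite [set v | gw_vert x v /\ act v w] (gw_nb x)}.
Proof.
move=> small; apply: filterS (ae_forall_countable (fun a => ae_no_infinite_descent (small a))).
by move=> w desc; apply: gw_components_finite => a va _; apply: desc.
Qed.

End quenched.

(** * The annealed bound *)

Section annealed.
Context (R : realType) (rho : nat -> R) d (Omega : measurableType d)
  (P : probability Omega R).
Variable xi : seq nat -> Omega -> nat.
Hypotheses (xi_rv : forall u, discrete_rv (xi u))
  (xi_indep : mutually_independent P setT xi)
  (xi_law : forall u k, P (xi u @^-1` [set k]) = (rho k)%:E).

Definition offspring_event (L : seq (seq nat * nat)) : set Omega :=
  [set w | all (fun vk => xi vk.1 w == vk.2) L].

Lemma measurable_offspring_event L : measurable (offspring_event L).
Proof.
elim: L => [|[v k] L IH].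
  by rewrite [offspring_event _](_ : _ = setT) //; apply/seteqP.
rewrite [offspring_event _](_ : _ = xi v @^-1` [set k] `&` offspring_event L).
  exact: measurableI (xi_rv v k) IH.
apply/seteqP; split => w; rewrite /offspring_event /=.
  by case/andP => /eqP.
by case=> -> ->; rewrite eqxx.
Qed.

Lemma offspring_event_prob L :
  uniq (map fst L) -> P (offspring_event L) = (\prod_(vk <- L) rho vk.2)%:E.
Proof.
move=> uL; have := xi_indep (fun v => [set k | (v, k) \in L]) uL (fun _ _ => I).
rewrite [X in P X = _ -> _](_ : _ = offspring_event L).
  move=> ->; rewrite big_map; congr (_%:E); apply: eq_big_seq => -[v k] vkL /=.
  rewrite [X in P (_ @^-1` X)](_ : _ = [set k]) ?xi_law //.
  apply/seteqP; split => j /=; last by move=> ->.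
  by move=> vjL; rewrite (uniq_map_fst_eq uL vjL vkL).
apply/seteqP; split => w /=.
  move=> wL; apply/allP => -[v k] vkL /=.
  by have /= wv := wL v (map_f fst vkL); rewrite (uniq_map_fst_eq uL wv vkL).
by move/allP => wL v /mapP[[u k] ukL ->] /=; have /eqP -> := wL _ ukL.
Qed.

Lemma indic_offspring_event L w :
  (\1_(offspring_event L) w : R) = (all (fun vk => xi vk.1 w == vk.2) L)%:R.
Proof.
rewrite indicE; suff -> : (w \in offspring_event L) = all (fun vk => xi vk.1 w == vk.2) L by [].
by apply/idP/idP; rewrite inE.
Qed.

Variable p : nat -> R.
Hypotheses (rho_ge0 : forall k, 0 <= rho k) (p_ge0 : forall k, 0 <= p k).

Lemma measurable_descent_weight n a :
  measurable_fun setT (fun w => descent_weight p (xi^~ w) a n).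
Proof.
elim: n a => [|n IH] a /=; first exact: measurable_cst.
apply: (measurable_fun_select (G := fun k w =>
  p k * \sum_(i < k) descent_weight p (xi^~ w) (rcons a i) n)) => // k.
by apply: measurable_funM; [exact: measurable_cst | apply: measurable_sum].
Qed.

Definition weighted_offspring (L : seq (seq nat * nat)) a n (w : Omega) : \bar R :=
  (\1_(offspring_event L) w * descent_weight p (xi^~ w) a n)%:E.

Lemma measurable_weighted_offspring L a n : measurable_fun setT (weighted_offspring L a n).
Proof.
apply/measurable_EFinP/measurable_funM; last exact: measurable_descent_weight.
exact/measurable_indic/measurable_offspring_event.
Qed.

Lemma weighted_offspring_ge0 L a n w : (0 <= weighted_offspring L a n w)%E.
Proof. by rewrite lee_fin mulr_ge0 ?descent_weight_ge0 // indicE. Qed.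

Hypothesis mean_le_half : (\sum_(k <oo) (k%:R * rho k * p k)%:E <= (2^-1)%:E)%E.

Definition weight_invariant (L : seq (seq nat * nat)) (a : seq nat) : Prop :=
  uniq (map fst L) /\ forall v, v \in map fst L -> (size v < size a)%N.

Lemma weight_invariant_nil a : weight_invariant [::] a.
Proof. by split. Qed.

Lemma weight_invariant_rcons L a k i :
  weight_invariant L a -> weight_invariant ((a, k) :: L) (rcons a i).
Proof.
move=> [uL La]; split; last first.
  by move=> v; rewrite inE size_rcons => /orP[/eqP -> //|/La/ltnW].
by rewrite /= uL andbT; apply/negP => /La; rewrite ltnn.
Qed.

Lemma weighted_offspringS L a n w :
  weighted_offspring L a n.+1 w = (\sum_(k <oo)
    (p k)%:E * \sum_(i < k) weighted_offspring ((a, k) :: L) (rcons a i) n w)%E.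
Proof.
rewrite (@nneseries_single _ _ (xi a w)).
- rewrite /weighted_offspring sumEFin -EFinM !indic_offspring_event /= eqxx /=.
  by congr (_%:E); rewrite -mulr_sumr mulrCA.
- by move=> k; rewrite mule_ge0 ?lee_fin ?sume_ge0 // => i _; apply: weighted_offspring_ge0.
move=> k xk; rewrite /weighted_offspring sumEFin -EFinM; congr (_%:E).
by rewrite big1 ?mulr0 // => i _; rewrite indic_offspring_event /= eq_sym (negbTE xk) mul0r.
Qed.

(* Split on the value k of [xi a]: the weights of the k children do not
   involve [xi a], so by independence each of them gains the factor [rho k];
   summing [k * rho k * p k] over k then costs the factor 1/2. *)
Lemma expected_weighted_offspring_le n a L : weight_invariant L a ->
  (\int[P]_w weighted_offspring L a n w <= ((2^-1) ^+ n * \prod_(vk <- L) rho vk.2)%:E)%E.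
Proof.
elim: n a L => [|n IH] a L [uL La].
  under eq_integral do rewrite /weighted_offspring /= mulr1.
  rewrite integral_indic ?setIT //; last exact: measurable_offspring_event.
  by rewrite expr0 mul1r -(offspring_event_prob uL).
under eq_integral do rewrite weighted_offspringS.
rewrite integral_nneseries //; last 2 first.
- move=> k; apply: emeasurable_funM; first exact: measurable_cst.
  by apply: emeasurable_sum => i; apply: measurable_weighted_offspring.
- by move=> k w _; rewrite mule_ge0 ?lee_fin ?sume_ge0 // => i _; apply: weighted_offspring_ge0.
apply: (@le_trans _ _ (\sum_(k <oo) (((2^-1) ^+ n * \prod_(vk <- L) rho vk.2)%:E *
   (k%:R * rho k * p k)%:E))%E); last first.
  rewrite nneseriesZl; last by move=> k _; rewrite lee_fin !mulr_ge0.
  apply: le_trans (lee_wpmul2l _ mean_le_half) _.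
    by rewrite lee_fin mulr_ge0 ?exprn_ge0 ?prodr_ge0.
  by rewrite -EFinM lee_fin exprSr mulrAC.
apply: lee_nneseries => [k _ _|k _]; first by apply: integral_ge0 => w _;
  rewrite mule_ge0 ?lee_fin ?sume_ge0 // => i _; apply: weighted_offspring_ge0.
rewrite ge0_integralZl_EFin //; last 2 first.
- by move=> w _; rewrite sume_ge0 // => i _; apply: weighted_offspring_ge0.
- by apply: emeasurable_sum => i; apply: measurable_weighted_offspring.
rewrite ge0_integral_sum //; last 2 first.
- by move=> i; apply: measurable_weighted_offspring.
- by move=> i w _; apply: weighted_offspring_ge0.
apply: (@le_trans _ _ ((p k)%:E * \sum_(i < k)
    ((2^-1) ^+ n * \prod_(vk <- (a, k) :: L) rho vk.2)%:E)%E).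
  rewrite lee_wpmul2l ?lee_fin // lee_sum // => i _.
  exact/IH/weight_invariant_rcons.
rewrite sumEFin -EFinM lee_fin sumr_const card_ord big_cons /= -mulr_natr.
by rewrite le_eqVlt; apply/predU1l; ring.
Qed.

Lemma expected_descent_weight_le n a :
  (\int[P]_w (descent_weight p (xi^~ w) a n)%:E <= ((2^-1) ^+ n)%:E)%E.
Proof.
have := @expected_weighted_offspring_le n a [::] (weight_invariant_nil a).
rewrite big_nil mulr1; apply: le_trans; rewrite le_eqVlt; apply/predU1l.
by apply: eq_integral => w _; rewrite /weighted_offspring indic_offspring_event mul1r.
Qed.

Lemma descent_weight_markov n a (eps : R) : 0 < eps ->
  (eps%:E * P [set w | eps <= descent_weight p (xi^~ w) a n]%R <= ((2^-1) ^+ n)%:E)%E.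
Proof.
move=> eps0; apply: le_trans (expected_descent_weight_le n a).
have abs_weight w : (`|(descent_weight p (xi^~ w) a n)%:E| =
    (descent_weight p (xi^~ w) a n)%:E)%E.
  by rewrite gee0_abs // lee_fin descent_weight_ge0.
rewrite -[[set w | _]%R]setTI.
rewrite [[set w | _]%R](_ : _ = [set w | eps%:E <= `|(descent_weight p (xi^~ w) a n)%:E|]%E).
  under eq_integral do rewrite -abs_weight.
  apply: (le_integral_comp_abse _ _ _ (fun _ r0 => r0) (fun _ _ _ _ => id)) => //.
  exact/measurable_EFinP/measurable_descent_weight.
by apply/seteqP; split => w /=; rewrite lee_fin ger0_norm // descent_weight_ge0.
Qed.

Lemma ae_descent_weight_lt a eps : 0 < eps ->
  {ae P, forall w, exists n, descent_weight p (xi^~ w) a n < eps}.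
Proof.
move=> eps0; pose A n := [set w | eps <= descent_weight p (xi^~ w) a n].
have mA n : measurable (A n).
  have := measurable_descent_weight n a measurableT (measurable_itv `[eps, +oo[%R).
  by rewrite setTI; congr measurable; apply/seteqP; split => w; rewrite /A /= in_itv /= andbT.
have mAn : measurable (\bigcap_n A n) by exact: bigcapT_measurable.
apply: (@negligibleS _ _ _ _ (\bigcap_n A n)).
  by move=> w /= nw n _; rewrite /A /= leNgt; apply/negP => lt; apply: nw; exists n.
apply/negligibleP => //; apply/eqP; rewrite -measure_le0.
apply/lee_addgt0Pr => e e0; rewrite add0e.
have [n _ /(_ n (leqnn n)) ne] := near_infty_natSinv_expn_lt (PosNum (mulr_gt0 eps0 e0)).
apply: (@le_trans _ _ (P (A n))); first by apply: le_measure; rewrite ?inE // => w /(_ n I).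
have Afin : P (A n) \is a fin_num by rewrite fin_num_measure.
have := descent_weight_markov n a eps0; rewrite -(fineK Afin) -EFinM !lee_fin => markov.
rewrite -(ler_pM2l eps0); apply: le_trans markov _.
by rewrite exprVn -div1r ltW.
Qed.

Lemma ae_descent_weight_vanishes :
  {ae P, forall w, forall a e, 0 < e -> exists n, descent_weight p (xi^~ w) a n < e}.
Proof.
have invS_gt0 j : 0 < j.+1%:R^-1 :> R by rewrite invr_gt0.
have := ae_forall_countable (fun aj : seq nat * nat => ae_descent_weight_lt aj.1 (invS_gt0 aj.2)).
apply: filterS => w small a e e0.
have [j _ /(_ j (leqnn j)) je] := near_infty_natSinv_lt (PosNum e0).
have [n ne] := small (a, j); exists n; exact: lt_trans je.
Qed.

End annealed.

Lemma cl_size_gw_nb x v : (cl_size (gw_nb x) v <= (x v).+2)%N.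
Proof.
rewrite /cl_size /gw_nb size_cat size_map size_iota ltnS.
by case: v => [|y v] //=; rewrite add1n.
Qed.

(* Delta is chosen for the integer [N] above [T] only, so that countably many
   choices of Delta serve every T. *)
Lemma gw_finitely_dissociable (R : realType) dJ (J : measurableType dJ)
    (vs : {finite_measure set J -> \bar R}) (C : nat -> R -> R)
    (x : seq nat -> nat) (D : nat -> R) :
  (0 < vs setT)%E ->
  (forall k T, (1 <= k)%N -> 0 <= T -> 0 < C k T) ->
  (forall k k' T, (1 <= k)%N -> (k <= k')%N -> 0 <= T -> C k T <= C k' T) ->
  (forall k T T', (1 <= k)%N -> 0 <= T -> T <= T' -> C k T <= C k T') ->
  (forall N, 0 < D N) ->
  (forall N a, gw_vert x a -> forall e, 0 < e -> exists n, descent_weight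
     (fun k => 1 - expR (- (D N * (fine (vs setT) * C k.+2 N%:R)))) x a n < e) ->
  finitely_dissociable vs C (gw_vert x) (gw_nb x).
Proof.
move=> vs_pos C_pos C_mono_k C_mono_T D_gt0 small T T0.
have c0 : 0 < fine (vs setT) by rewrite -lte_fin fineK ?fin_num_measure.
pose N := (Num.truncn T).+1.
have TN : T <= N%:R by rewrite ltW // truncnS_gt.
exists (Num.min T (D N)); split; first by rewrite lt_min T0 D_gt0.
split; first by rewrite ge_min lexx.
move=> d Omega P act act_rv act_indep act_law.
apply: (ae_gw_components_finite act_rv act_indep _ _ (small N)).
  by move=> k; rewrite one_sub_expN_ge0 // mulr_ge0 ?(ltW (D_gt0 N)) // mulr_ge0 ?ltW ?C_pos.
move=> v vv; rewrite act_law // lee_fin; apply: one_sub_expN_homo.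
rewrite -mulrA; apply: ler_pM.
- by rewrite le_min !ltW.
- by rewrite mulr_ge0 ?ltW ?C_pos // ltW.
- by rewrite ge_min lexx orbT.
apply: ler_wpM2l; first exact: ltW.
apply: le_trans (C_mono_T _ _ _ _ (ltW T0) TN) _ => //.
by rewrite C_mono_k ?cl_size_gw_nb.
Qed.

Theorem mainTheorem9 (R : realType)
  (* offspring distribution rho on N_0 *)
  (rho : nat -> R)
  (rho_ge0 : forall k, 0 <= rho k)
  (rho_sum1 : series rho @ \oo --> (1 : R))
  (rho_mean : cvg (series (fun k => k%:R * rho k) @ \oo))
  (* the GW(rho) tree: i.i.d. child numbers on a probability space *)
  (d : measure_display) (Omega : measurableType d) (P : probability Omega R)
  (xi : seq nat -> Omega -> nat)
  (xi_rv : forall u, discrete_rv (xi u))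
  (xi_indep : mutually_independent P setT xi)
  (xi_law : forall u k, P (xi u @^-1` [set k]) = (rho k)%:E)
  (* parameters of finite dissociability *)
  (dJ : measure_display) (J : measurableType dJ)
  (J_countable : countable [set: J])
  (vs : {finite_measure set J -> \bar R})
  (vs_pos : (0 < vs setT)%E)
  (C : nat -> R -> R)
  (C_pos : forall k T, (1 <= k)%N -> 0 <= T -> 0 < C k T)
  (C_mono_k : forall k k' T, (1 <= k)%N -> (k <= k')%N -> 0 <= T -> C k T <= C k' T)
  (C_mono_T : forall k T T', (1 <= k)%N -> 0 <= T -> T <= T' -> C k T <= C k T') :
  {ae P, forall w, finitely_dissociable vs C (gw_vert (xi^~ w)) (gw_nb (xi^~ w))}.
Proof.
have c0 : 0 < fine (vs setT) by rewrite -lte_fin fineK ?fin_num_measure.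
pose a N k := fine (vs setT) * C k.+2 N%:R.
have a_ge0 N k : 0 <= a N k by rewrite mulr_ge0 ?ltW ?C_pos.
have delta N : exists D, 0 < D /\ (\sum_(k <oo)
    (k%:R * rho k * (1 - expR (- (D * a N k))))%:E <= (2^-1)%:E)%E.
  have [] := @exists_damping_series_le R (fun k => k%:R * rho k) (a N) 2^-1.
  - by move=> k; rewrite mulr_ge0.
  - exact: rho_mean.
  - exact: a_ge0.
  - by move=> k k' kk'; apply: ler_wpM2l; [exact: ltW | exact: C_mono_k].
  - by rewrite invr_gt0.
  by move=> D D0 mean; exists D.
have [D HD] := choice delta.
have p_ge0 N k : 0 <= 1 - expR (- (D N * a N k)).
  by apply/one_sub_expN_ge0/mulr_ge0; [exact: ltW (HD N).1 | exact: a_ge0].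
apply: filterS (ae_forall_countable (fun N => ae_descent_weight_vanishes
  xi_rv xi_indep xi_law rho_ge0 (p_ge0 N) (HD N).2)) => w small.
apply: (gw_finitely_dissociable vs_pos C_pos C_mono_k C_mono_T (fun N => (HD N).1)).
by move=> N a' _; apply: small.
Qed.
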